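(* Let $\Pi'\subseteq\Pi$ be nonempty and let $t\ge1$. Then there exists a distribution $P$ over $\Pi'$ such that for all $\pi\in\Pi'$, \[\mathbb{E}_{x\sim D_X}\Bigl[\frac{1}{(1-K\mu_t)W_{P}(x,\pi(x))+\mu_t}\Bigr]\le 2K.\]
   Context: $A$ is a set of $K$ actions, $X$ a set of contexts, $\Pi$ a finite set of $N$ policies $\pi:X\to A$, $D_X$ a distribution on $X$, $\delta\in(0,1)$. $\delta_t=\delta/(4Nt^2)$ and $\mu_t=\min\{\frac1{2K},\sqrt{\ln(1/\delta_t)/(2Kt)}\}$. For a distribution $P$ over $\Pi'$, $W_P(x,a)=\sum_{\pi\in\Pi':\pi(x)=a}P(\pi)$. (This is the feasibility of the distribution-selection step of the PolicyElimination algorithm, where $\Pi'$ is the current nonempty set $\Pi_{t-1}$ of surviving policies.) *)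

From HB Require Import structures.
From mathcomp Require Import all_boot all_order all_algebra.
From mathcomp Require Import all_classical all_reals all_analysis.
Set Implicit Arguments. Unset Strict Implicit. Unset Printing Implicit Defensive.
Import Order.TTheory GRing.Theory Num.Theory.
Local Open Scope ring_scope.

Definition delta_t (R : realType) (delta : R) (N t : nat) : R :=
  delta / (4 * N%:R * (t%:R ^+ 2)).

Definition mu_t (R : realType) (K N t : nat) (delta : R) : R :=
  Num.min (1 / (2 * K%:R))
          (Num.sqrt (ln (1 / delta_t delta N t) / (2 * K%:R * t%:R))).

(* Policies are indexed by a finite type I, pol : I -> X -> A.
   A distribution over Pi' (a subset of I) is a nonnegative weight
   function supported on Pi' summing to 1 on Pi'. *)
Definition is_distr_on (I : finType) (R : realType) (Pi' : {set I}) (P : I -> R) : Prop :=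
  (forall i, 0 <= P i) /\ (forall i, i \notin Pi' -> P i = 0) /\
  \sum_(i in Pi') P i = 1.

Definition W (I : finType) (X : Type) (A : eqType) (R : realType)
  (pol : I -> X -> A) (Pi' : {set I}) (P : I -> R) (x : X) (a : A) : R :=
  \sum_(i in Pi' | pol i x == a) P i.

From HB Require Import structures.
From mathcomp Require Import all_boot all_order all_algebra.
From mathcomp Require Import all_classical all_reals all_analysis.
From mathcomp Require Import measurable_realfun ring lra.
Set Implicit Arguments. Unset Strict Implicit. Unset Printing Implicit Defensive.
Import Order.TTheory GRing.Theory Num.Theory.
Local Open Scope ring_scope.

(* Contexts only matter through the vector (pi(x))_pi, which ranges over
   a finite type, so the expectation is a finite weighted sum.  Consider the
   log-barrier potential Phi(P) = E_x sum_a -ln((1 - K mu) W_P(x,a) + mu), which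
   is nonnegative.  Moving P towards the point mass at pi by a step e changes
   Phi by at most e K (1 - mu) - e (1 - K mu) V(P,pi) + K e^2/mu^2, where V(P,pi)
   is the expectation to be bounded.  If V(P,pi) > 2K, the step e = mu^3/2
   lowers Phi by more than K mu^4/4; hence any P whose potential is within
   K mu^4/4 of the infimum satisfies V(P,pi) <= 2K for every pi. *)

Lemma lnB_le (R : realType) (m y z : R) : 0 < m -> m <= y -> m <= z ->
  ln y - ln z <= (y - z) / y + (y - z) ^+ 2 / m ^+ 2.
Proof.
move=> m_gt0 my mz.
have y_gt0 : 0 < y := lt_le_trans m_gt0 my.
have z_gt0 : 0 < z := lt_le_trans m_gt0 mz.
have ln_le : ln y - ln z <= y / z - 1.
  rewrite -lnV ?posrE // -lnM ?posrE ?invr_gt0 //.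
  have := @le_ln1Dx _ (y / z - 1); rewrite addrCA subrr addr0; apply.
  have : 0 < y / z by rewrite divr_gt0.
  lra.
apply: (le_trans ln_le).
have -> : y / z - 1 = (y - z) / y + (y - z) ^+ 2 / (y * z).
  by field; rewrite !gt_eqF.
rewrite lerD2l ler_wpM2l ?sqr_ge0 // lef_pV2 ?posrE ?mulr_gt0 ?exprn_gt0 //.
by rewrite expr2 ler_pM // ltW.
Qed.

Section Weights.
Variables (R : realType) (I : finType) (X : Type) (A : eqType).
Variables (pol : I -> X -> A) (Pi' : {set I}).
Implicit Types (P Q : I -> R) (e : R).

Definition point_mass (pi i : I) : R := (i == pi)%:R.

Definition mix (e : R) (P Q : I -> R) (i : I) : R := (1 - e) * P i + e * Q i.

Lemma W_ge0 P x a : is_distr_on Pi' P -> 0 <= W pol Pi' P x a.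
Proof. by case=> P_ge0 _; apply: sumr_ge0. Qed.

Lemma W_le1 P x a : is_distr_on Pi' P -> W pol Pi' P x a <= 1.
Proof.
case=> P_ge0 [_ <-]; rewrite [X in _ <= X](bigID (fun i => pol i x == a)) /=.
by rewrite lerDl sumr_ge0.
Qed.

Lemma W_point_mass pi x a : pi \in Pi' ->
  W pol Pi' (point_mass pi) x a = (pol pi x == a)%:R.
Proof.
move=> hpi; rewrite /W /point_mass; case: (boolP (pol pi x == a)) => hpia.
  rewrite (bigD1 pi) /=; last by rewrite hpi hpia.
  by rewrite eqxx big1 ?addr0 // => i /andP[_ /negPf ->].
rewrite big1 // => i /andP[_ hi]; case: eqP => // eq_ipi.
by move: hpia; rewrite -eq_ipi hi.
Qed.

Lemma W_mix e P Q x a :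
  W pol Pi' (mix e P Q) x a = (1 - e) * W pol Pi' P x a + e * W pol Pi' Q x a.
Proof. by rewrite /W /mix big_split /= -!mulr_sumr. Qed.

Lemma is_distr_on_point_mass pi : pi \in Pi' -> is_distr_on Pi' (point_mass pi).
Proof.
move=> hpi; rewrite /point_mass; split; last split.
- by move=> i; rewrite ler0n.
- by move=> i; case: eqP => [-> /negP//|].
- by rewrite (bigD1 pi) //= eqxx big1 ?addr0 // => i /andP[_ /negPf ->].
Qed.

Lemma is_distr_on_mix e P Q : 0 <= e <= 1 ->
  is_distr_on Pi' P -> is_distr_on Pi' Q -> is_distr_on Pi' (mix e P Q).
Proof.
case/andP=> e_ge0 e_le1 [P_ge0 [P_out P_sum]] [Q_ge0 [Q_out Q_sum]].
rewrite /mix; split; last split.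
- by move=> i; rewrite addr_ge0 ?mulr_ge0 ?subr_ge0.
- by move=> i hi; rewrite P_out ?Q_out // !mulr0 addr0.
- by rewrite big_split /= -!mulr_sumr P_sum Q_sum !mulr1 subrK.
Qed.

End Weights.

Section LogBarrier.
Variables (R : realType) (A I T : finType) (pol : I -> T -> A) (Pi' : {set I}).
Variables (p : T -> R) (mu : R).
Hypotheses (p_ge0 : forall v, 0 <= p v) (sum_p : \sum_v p v = 1).
Hypotheses (mu_gt0 : 0 < mu) (K_ge1 : 1 <= #|A|%:R :> R).
Hypothesis Kmu_le : 2 * (#|A|%:R * mu) <= 1.
Implicit Types (P : I -> R) (e : R).

Local Notation K := (#|A|%:R : R).
Local Notation c := (1 - K * mu).

Definition Wmu P v a := c * W pol Pi' P v a + mu.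

Definition potential P := \sum_v p v * \sum_a - ln (Wmu P v a).

Definition mean_inv_Wmu P pi := \sum_v p v / Wmu P v (pol pi v).

Lemma half_le_c : 1 / 2 <= c.
Proof. by move: Kmu_le; lra. Qed.

Lemma c_le : c <= 1 - mu.
Proof. by move: K_ge1 mu_gt0; nra. Qed.

Lemma Wmu_ge P v a : is_distr_on Pi' P -> mu <= Wmu P v a.
Proof.
by move=> hP; rewrite lerDr mulr_ge0 ?W_ge0 //; have := half_le_c; lra.
Qed.

Lemma Wmu_le1 P v a : is_distr_on Pi' P -> Wmu P v a <= 1.
Proof.
move=> hP; have := W_le1 pol v a hP; have := W_ge0 pol v a hP.
have := half_le_c; have := c_le; rewrite /Wmu; nra.
Qed.

Lemma potential_ge0 P : is_distr_on Pi' P -> 0 <= potential P.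
Proof.
move=> hP; apply: sumr_ge0 => v _; rewrite mulr_ge0 ?sumr_ge0 // => a _.
by rewrite oppr_ge0 ln_le0 // Wmu_le1.
Qed.

Lemma Wmu_mix e P pi v a : pi \in Pi' ->
  Wmu (mix e P (point_mass R pi)) v a =
  Wmu P v a - e * c * (W pol Pi' P v a - (pol pi v == a)%:R).
Proof. by move=> hpi; rewrite /Wmu W_mix W_point_mass //; ring. Qed.

Lemma lnWmu_mix_le e P pi v a : 0 <= e <= 1 -> pi \in Pi' -> is_distr_on Pi' P ->
  ln (Wmu P v a) - ln (Wmu (mix e P (point_mass R pi)) v a) <=
  e * (1 - mu) - e * c * (pol pi v == a)%:R / Wmu P v a + e ^+ 2 / mu ^+ 2.
Proof.
move=> he hpi hP.
have hQ := is_distr_on_mix he hP (is_distr_on_point_mass R hpi).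
case/andP: he => e_ge0 e_le1.
have y_ge := Wmu_ge v a hP; have y_le1 := Wmu_le1 v a hP.
have y_gt0 : 0 < Wmu P v a := lt_le_trans mu_gt0 y_ge.
apply: (le_trans (lnB_le mu_gt0 y_ge (Wmu_ge v a hQ))).
rewrite Wmu_mix // opprB subrKC.
have W_ge0 := W_ge0 pol v a hP; have W_le1 := W_le1 pol v a hP.
set w := W pol Pi' P v a in W_ge0 W_le1 y_gt0 y_ge y_le1 *.
set b : R := (pol pi v == a)%:R.
have b_ge0 : 0 <= b by rewrite ler0n.
have b_le1 : b <= 1 by rewrite lern1 leq_b1.
apply: lerD.
  (* c w = Wmu - mu, and mu / Wmu >= mu because Wmu <= 1 *)
  have -> : e * c * (w - b) / Wmu P v a = e * (1 - mu / Wmu P v a) - e * c * b / Wmu P v a.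
    by rewrite /Wmu -/w; field; rewrite gt_eqF.
  rewrite lerD2r ler_wpM2l // lerD2l lerN2 ler_pdivlMr // ger_pMr //.
apply: ler_wpM2r; first by rewrite invr_ge0 exprn_ge0 // ltW.
have cwb_le1 : (c * (w - b)) ^+ 2 <= 1.
  have c2_le1 : c ^+ 2 <= 1 by rewrite exprn_ile1 //; move: half_le_c c_le mu_gt0; lra.
  have wb2_le1 : (w - b) ^+ 2 <= 1 by rewrite expr2; nra.
  by rewrite exprMn mulr_ile1 ?sqr_ge0.
by rewrite -mulrA exprMn ler_piMr ?sqr_ge0.
Qed.

Lemma sum_lnWmu_mix_le e P pi v : 0 <= e <= 1 -> pi \in Pi' -> is_distr_on Pi' P ->
  \sum_a (ln (Wmu P v a) - ln (Wmu (mix e P (point_mass R pi)) v a)) <=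
  K * (e * (1 - mu) + e ^+ 2 / mu ^+ 2) - e * c / Wmu P v (pol pi v).
Proof.
move=> he hpi hP; apply: le_trans (ler_sum _ (fun a _ => lnWmu_mix_le v a he hpi hP)) _.
have pointwise_pi : \sum_a e * c * (pol pi v == a)%:R / Wmu P v a = e * c / Wmu P v (pol pi v).
  rewrite (bigD1 (pol pi v)) //= eqxx mulr1 big1 ?addr0 // => a /negPf.
  by rewrite eq_sym => ->; rewrite mulr0 mul0r.
have sum_const x : \sum_(a : A) x = K * x by rewrite sumr_const mulr_natl !cardT.
by rewrite big_split sumrB pointwise_pi /= !sum_const addrAC -mulrDr.
Qed.

Lemma potential_mix_le e P pi : 0 <= e <= 1 -> pi \in Pi' -> is_distr_on Pi' P ->
  potential (mix e P (point_mass R pi)) - potential P <=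
  K * (e * (1 - mu) + e ^+ 2 / mu ^+ 2) - e * c * mean_inv_Wmu P pi.
Proof.
move=> he hpi hP; set Q := mix e P (point_mass R pi).
have -> : potential Q - potential P =
    \sum_v p v * \sum_a (ln (Wmu P v a) - ln (Wmu Q v a)).
  rewrite /potential -sumrB; apply: eq_bigr => v _; rewrite -mulrBr -sumrB.
  by congr (_ * _); apply: eq_bigr => a _; rewrite opprK addrC.
apply: le_trans (ler_sum _ (fun v _ => ler_wpM2l (p_ge0 v) (sum_lnWmu_mix_le v he hpi hP))) _.
set B := K * _; rewrite /mean_inv_Wmu.
have -> : \sum_v p v * (B - e * c / Wmu P v (pol pi v)) =
    B * \sum_v p v - e * c * \sum_v p v / Wmu P v (pol pi v).
  by rewrite !mulr_sumr -sumrB; apply: eq_bigr => v _; ring.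
by rewrite sum_p mulr1.
Qed.

Lemma potential_improvable P pi : pi \in Pi' -> is_distr_on Pi' P ->
  2 * K < mean_inv_Wmu P pi ->
  exists2 Q, is_distr_on Pi' Q & potential Q < potential P - K * mu ^+ 4 / 4.
Proof.
move=> hpi hP hV; pose e := mu ^+ 3 / 2.
have mu_le_half : mu <= 1 / 2 by move: K_ge1 Kmu_le mu_gt0; nra.
have e_gt0 : 0 < e by rewrite divr_gt0 ?exprn_gt0.
have he : 0 <= e <= 1.
  have : mu ^+ 3 <= 1 by rewrite exprn_ile1 ?ltW //; move: mu_le_half; lra.
  by move=> mu3_le1; rewrite ltW //= /e; move: mu3_le1; lra.
exists (mix e P (point_mass R pi)).
  exact: is_distr_on_mix he hP (is_distr_on_point_mass R hpi).
have ec_gt0 : 0 < e * c by rewrite mulr_gt0 //; move: half_le_c; lra.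
have hc : e * c * (2 * K) < e * c * mean_inv_Wmu P pi by rewrite ltr_pM2l.
have hKmu : K * e * (2 * (K * mu) - 1) <= 0.
  apply: mulr_ge0_le0; first by rewrite mulr_ge0 ?ler0n ?(ltW e_gt0).
  by move: Kmu_le; lra.
have he1 : K * (e * mu) = K * mu ^+ 4 / 4 * 2 by rewrite /e; field.
have he2 : K * (e ^+ 2 / mu ^+ 2) = K * mu ^+ 4 / 4 by rewrite /e; field; rewrite gt_eqF.
move: (potential_mix_le he hpi hP) hc hKmu he1 he2; lra.
Qed.

Lemma exists_mean_inv_Wmu_le : Pi' != finset.set0 ->
  exists P, is_distr_on Pi' P /\ forall pi, pi \in Pi' -> mean_inv_Wmu P pi <= 2 * K.
Proof.
case/set0Pn=> i0 hi0.
pose E : set R := [set potential P | P in is_distr_on Pi']%classic.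
have E_lb : has_lbound E by exists 0 => _ [P hP <-]; exact: potential_ge0.
have E_inf : has_inf E.
  by split=> //; exists (potential (point_mass R i0)); exists (point_mass R i0);
     first exact: is_distr_on_point_mass.
have eta_gt0 : 0 < K * mu ^+ 4 / 4 by rewrite divr_gt0 ?mulr_gt0 ?exprn_gt0 //; move: K_ge1; lra.
have [_ [P hP <-] P_near_inf] := inf_adherent eta_gt0 E_inf.
exists P; split=> // pi hpi; rewrite leNgt; apply/negP => hV.
have [Q hQ Q_lt] := potential_improvable hpi hP hV.
have : inf E <= potential Q by apply: ge_inf E_lb _ _; exists Q.
by move: P_near_inf Q_lt; lra.
Qed.

End LogBarrier.

Lemma mu_t_gt0 (R : realType) (K N t : nat) (delta : R) :
  (0 < K)%N -> (0 < N)%N -> (0 < t)%N -> 0 < delta -> delta < 1 ->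
  0 < mu_t K N t delta.
Proof.
move=> K_gt0 N_gt0 t_gt0 delta_gt0 delta_lt1.
have D_ge1 : 1 <= 4 * N%:R * t%:R ^+ 2 :> R.
  by rewrite -natrX -!natrM ler1n !muln_gt0 N_gt0 t_gt0.
have D_gt0 : 0 < 4 * N%:R * t%:R ^+ 2 :> R := lt_le_trans ltr01 D_ge1.
rewrite /mu_t lt_min divr_gt0 ?mulr_gt0 ?ltr0n //= sqrtr_gt0.
rewrite divr_gt0 ?mulr_gt0 ?ltr0n // ln_gt0 // div1r invf_gt1 ?divr_gt0 //.
by rewrite ltr_pdivrMr // mul1r (lt_le_trans delta_lt1).
Qed.

Lemma mu_t_le (R : realType) (K N t : nat) (delta : R) :
  (0 < K)%N -> 2 * (K%:R * mu_t K N t delta) <= 1.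
Proof.
move=> K_gt0; rewrite mulrA -ler_pdivlMl ?mulr_gt0 ?ltr0n // mulr1 -div1r.
by rewrite /mu_t ge_min lexx.
Qed.

Section FiniteValuedIntegral.
Local Open Scope classical_set_scope.
Variables (R : realType) (d : measure_display) (X : measurableType d).

Lemma probability_inhabited (P : probability X R) : inhabited X.
Proof.
have /set0P[x _] : [set: X] != set0.
  apply/eqP => X0; have := probability_setT P; rewrite X0 measure0.
  by move=> -[] /esym/eqP; rewrite oner_eq0.
by constructor.
Qed.

Lemma measurable_ffun_fiber (I A : finType) (f : I -> X -> A) :
  (forall i a, measurable [set x | f i x = a]) ->
  forall v : {ffun I -> A}, measurable [set x | [ffun i => f i x] = v].
Proof.
move=> mf v.
have -> : [set x | [ffun i => f i x] = v] =
    \big[setI/setT]_(i <- index_enum I) [set x | f i x = v i].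
  rewrite -bigcap_seq; apply/seteqP; split=> x /=.
    by move=> <- i _; rewrite ffunE.
  by move=> fx_v; apply/ffunP => i; rewrite ffunE fx_v //= mem_index_enum.
by apply: bigsetI_measurable => i _.
Qed.

Lemma integral_finite_valued (m : {finite_measure set X -> \bar R}) (T : finType)
    (f : X -> T) (g : T -> R) :
  (forall v, measurable [set x | f x = v]) -> (forall v, 0 <= g v) ->
  (\int[m]_x (g (f x))%:E = (\sum_v g v * fine (m [set x | f x = v]))%:E)%E.
Proof.
move=> mf g_ge0.
have g_indic x : (g (f x))%:E = (\sum_v (g v * \1_[set x | f x = v] x)%:E)%E.
  rewrite (bigD1 (f x)) //= indicE mem_set // mulr1 big1 ?adde0 // => v fx_v.
  by rewrite indicE memNset ?mulr0 // => /= eq_fx; rewrite eq_fx eqxx in fx_v.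
under eq_integral do rewrite g_indic.
rewrite ge0_integral_sum //; last 2 first.
- move=> v; apply/measurable_EFinP; apply: measurable_funM.
    exact: measurable_cst.
  exact/measurable_indicP.
- by move=> v x _; rewrite lee_fin mulr_ge0 // indicE ler0n.
rewrite -sumEFin; apply: eq_bigr => v _.
rewrite (@integralZl_indic _ _ _ _ _ measurableT (fun _ => [set x | f x = v])) //;
  last by rewrite ltNge g_ge0.
by rewrite integral_indic // setIT EFinM fineK // fin_num_measure.
Qed.

Lemma sum_probability_fibers (P : probability X R) (T : finType) (f : X -> T) :
  (forall v, measurable [set x | f x = v]) -> \sum_v fine (P [set x | f x = v]) = 1.
Proof.
move=> mf; have := integral_finite_valued P (g := fun=> 1) mf (fun=> ler01).
rewrite integral_cst //= probability_setT mule1 => -[] /esym <-.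
by apply: eq_bigr => v _; rewrite mul1r.
Qed.

End FiniteValuedIntegral.

Theorem corollary1 (R : realType) (d : measure_display) (X : measurableType d)
  (DX : probability X R) (A : finType) (I : finType) (pol : I -> X -> A)
  (pol_inj : injective pol)
  (pol_meas : forall (i : I) (a : A), measurable [set x | pol i x = a])
  (delta : R) (hdelta0 : 0 < delta) (hdelta1 : delta < 1)
  (Pi' : {set I}) (hPi' : Pi' != finset.set0) (t : nat) (ht : (1 <= t)%N) :
  let K := #|A| in
  let N := #|I| in
  let mu := mu_t K N t delta in
  exists P : I -> R, is_distr_on Pi' P /\
    forall pi : I, pi \in Pi' ->
      (\int[DX]_x ((1 / ((1 - K%:R * mu) * W pol Pi' P x (pol pi x) + mu))%:E)
        <= (2 * K%:R)%:E)%E.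
Proof.
move=> K N mu.
have [i0 hi0] := set0Pn _ hPi'.
have [x0] := probability_inhabited DX.
have K_gt0 : (0 < K)%N by apply/card_gt0P; exists (pol i0 x0).
have N_gt0 : (0 < N)%N by apply/card_gt0P; exists i0.
have mu_gt0 : 0 < mu by apply: mu_t_gt0.
have K_ge1 : 1 <= K%:R :> R by rewrite ler1n.
have Kmu_le : 2 * (K%:R * mu) <= 1 := mu_t_le _ _ _ K_gt0.
pose behaviour x : {ffun I -> A} := [ffun i => pol i x].
pose act (i : I) (v : {ffun I -> A}) : A := v i.
have m_behaviour := measurable_ffun_fiber pol_meas.
have [P [hP hV]] := exists_mean_inv_Wmu_le act
  (fun v => fine_ge0 (measure_ge0 DX [set x | behaviour x = v]%classic))
  (sum_probability_fibers DX m_behaviour) mu_gt0 K_ge1 Kmu_le hPi'.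
exists P; split=> // pi hpi.
have W_behaviour x : W pol Pi' P x (pol pi x) = W act Pi' P (behaviour x) (act pi (behaviour x)).
  by apply: eq_bigl => i; rewrite /act !ffunE.
under eq_integral do rewrite W_behaviour div1r.
rewrite (integral_finite_valued DX (f := behaviour)
  (g := fun v => (Wmu act Pi' mu P v (act pi v))^-1)) //; last first.
  by move=> v; rewrite invr_ge0 (le_trans (ltW mu_gt0)) ?(Wmu_ge act Kmu_le).
by rewrite lee_fin; under eq_bigr do rewrite mulrC; exact: hV.
Qed.
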